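(* Let $X$ be a finite set and $N_X:X\times X\to\mathbb{R}$ a phylogenetic network. Then for all $x,x'\in X$, $$N_X(x,x')=\min\{U_X(x,x')\mid U_X\text{ a symmetric ultranetwork over }X\text{ with }U_X\geq N_X\text{ entrywise}\}.$$
   Context: A phylogenetic network over $X$ is a map $N_X:X\times X\to\mathbb{R}$ with $N_X(x,x')=N_X(x',x)$ and $\max\{N_X(x,x),N_X(x',x')\}\leq N_X(x,x')$ for all $x,x'\in X$. A symmetric ultranetwork over $X$ is a map $U_X:X\times X\to\mathbb{R}$ with $U_X(x,x')=U_X(x',x)$ and $U_X(x,x'')\leq\max\{U_X(x,x'),U_X(x',x'')\}$ for all $x,x',x''\in X$. *)

From mathcomp Require Import all_boot all_order all_algebra.
From mathcomp Require Import reals.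
Set Implicit Arguments. Unset Strict Implicit. Unset Printing Implicit Defensive.
Import Order.TTheory GRing.Theory Num.Theory.
Local Open Scope ring_scope.

Definition phylo_network (R : realType) (X : finType) (N : X -> X -> R) : Prop :=
  (forall x x', N x x' = N x' x) /\
  (forall x x', Num.max (N x x) (N x' x') <= N x x').

Definition sym_ultranetwork (R : realType) (X : finType) (U : X -> X -> R) : Prop :=
  (forall x x', U x x' = U x' x) /\
  (forall x x' x'', U x x'' <= Num.max (U x x') (U x' x'')).

Definition is_min (R : realType) (S : R -> Prop) (m : R) : Prop :=
  S m /\ (forall y, S y -> m <= y).

From mathcomp Require Import all_boot all_order all_algebra.
From mathcomp Require Import reals.
Import Order.TTheory GRing.Theory Num.Theory.
Local Open Scope ring_scope.

(* The subdominant ultranetwork of a phylogenetic network N is N itself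
   entrywise: every symmetric ultranetwork U >= N has U x x' >= N x x'
   trivially, so it suffices to exhibit, for each pair (x, x'), one
   ultranetwork U >= N with U x x' = N x x'.

   The witness is a "two-level" network: it takes the value c := N x x' on
   the square {x, x'}^2 and a large constant M elsewhere. *)

(* A function taking a value c on S x S and a value M >= c elsewhere is a
   symmetric ultranetwork: the ultrametric inequality can only fail when
   its left side is M and both right entries are c, which would force both
   endpoints into S. *)
Lemma two_level_ultranetwork {R : realType} {X : finType} (S : pred X) (c M : R) :
  c <= M -> sym_ultranetwork (fun y y' : X => if S y && S y' then c else M).
Proof.
move=> cM; split=> [y y'|y y' y'']; first by rewrite andbC.
case: ifP => [_|notS_yy''].
  by rewrite le_max; case: ifP => _; rewrite ?lexx ?cM.
case: (boolP (S y && S y')) => [/andP[Sy ->] /=|_]; last by rewrite le_max lexx.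
case: (boolP (S y'')) => [Sy''|_]; last by rewrite le_max lexx orbT.
by rewrite Sy Sy'' in notS_yy''.
Qed.

Lemma finite_network_bound {R : realType} {X : finType} (N : X -> X -> R) (c : R) :
  exists M : R, c <= M /\ forall y y', N y y' <= M.
Proof.
exists (\big[Num.max/c]_(p : X * X) N p.1 p.2); split; first exact: bigmax_ge_id.
by move=> y y'; apply: (le_bigmax _ (fun p : X * X => N p.1 p.2) (y, y')).
Qed.

Lemma phylo_network_pair_bound {R : realType} {X : finType} (N : X -> X -> R) (x x' : X) :
  phylo_network N ->
  forall y y', y \in [:: x; x'] -> y' \in [:: x; x'] -> N y y' <= N x x'.
Proof.
move=> [Nsym Ndiag] y y'; have := Ndiag x x'; rewrite ge_max => /andP[Nxx Nx'x'].
by rewrite !inE => /orP[]/eqP-> /orP[]/eqP->; rewrite // Nsym.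
Qed.

Theorem mainTheorem7 (R : realType) (X : finType) (N : X -> X -> R) :
  phylo_network N ->
  forall x x' : X,
    is_min (fun r : R => exists U : X -> X -> R,
              sym_ultranetwork U /\ (forall y y', N y y' <= U y y') /\ r = U x x')
           (N x x').
Proof.
move=> phyloN x x'; split; last by move=> r [U [_ [NU ->]]].
have [M [cM NM]] := finite_network_bound N (N x x').
pose S : pred X := mem [:: x; x'].
exists (fun y y' => if S y && S y' then N x x' else M).
split; first exact: two_level_ultranetwork.
split; last by rewrite /S !inE !eqxx orbT.
move=> y y'; case: ifP => [/andP[Sy Sy']|_]; last exact: NM.
exact: phylo_network_pair_bound.
Qed.
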